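(* Consider any sequences $\{(x_k,y_k,\gamma_k)\}_{k\ge0}$, $\{(\tilde x_k,u_k,\tilde\gamma_k)\}_{k\ge1}$ generated by the inexact symmetric proximal ADMM described in the context. Then for every $k\ge1$: $$G(x_{k-1}-x_k)\in\partial f(\tilde x_k)-A^*\tilde\gamma_k,$$ $$\Big(H+\tfrac{(\tau-\tau\theta+\theta)\beta}{\tau+\theta}B^*B\Big)(y_{k-1}-y_k)-\tfrac{\tau}{\tau+\theta}B^*(\gamma_{k-1}-\gamma_k)\in\partial g(y_k)-B^*\tilde\gamma_k,$$ $$-\tfrac{\tau}{\tau+\theta}B(y_{k-1}-y_k)+\tfrac{1}{(\tau+\theta)\beta}(\gamma_{k-1}-\gamma_k)=A\tilde x_k+By_k-b.$$ As a consequence, $M(z_{k-1}-z_k)\in T(\tilde z_k)$ for every $k\ge1$, where $z_k=(x_k,y_k,\gamma_k)$ for $k\ge0$ and $\tilde z_k=(\tilde x_k,y_k,\tilde\gamma_k)$ for $k\ge1$.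
   Context: Let $f:\mathbb{R}^n\to(-\infty,\infty]$ and $g:\mathbb{R}^p\to(-\infty,\infty]$ be proper closed convex functions, $A\in\mathbb{R}^{m\times n}$, $B\in\mathbb{R}^{m\times p}$, $b\in\mathbb{R}^m$ (problem: $\min\{f(x)+g(y):Ax+By=b\}$). Standing assumption: there exists $(x^*,y^*,\gamma^* )$ solving the Lagrangian system $0\in\partial f(x)-A^*\gamma$, $0\in\partial g(y)-B^*\gamma$, $0=Ax+By-b$. Here $\partial$ is the subdifferential, $A^*$ the transpose, $\mathbb{S}^n_{++}$ ($\mathbb{S}^p_+$) the symmetric positive definite (semidefinite) matrices, and $\|z\|_Q=\sqrt{\langle Qz,z\rangle}$ for $Q$ positive semidefinite. Algorithm (inexact symmetric proximal ADMM): given $(x_0,y_0,\gamma_0)\in\mathbb{R}^n\times\mathbb{R}^p\times\mathbb{R}^m$, $\beta>0$, $\tilde\sigma,\hat\sigma\in[0,1)$, $G\in\mathbb{S}^n_{++}$, $H\in\mathbb{S}^p_+$, and $(\tau,\theta)\in\mathcal R_{\tilde\sigma}:=\{(\tau,\theta):\tau\in(-1,1-\tilde\sigma),\ \tau+\theta>0,\ (1-\tau^2)(2-\tau-\theta-\tilde\sigma)-(1-\theta)^2(1-\tau-\tilde\sigma)>0\}$. For $k=1,2,\dots$: compute $(\tilde x_k,u_k)$ with $u_k\in\partial f(\tilde x_k)-A^*\tilde\gamma_k$ and $\|\tilde x_k-x_{k-1}+G^{-1}u_k\|_G^2\le\frac{\tilde\sigma}{\beta}\|\tilde\gamma_k-\gamma_{k-1}\|^2+\hat\sigma\|\tilde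 x_k-x_{k-1}\|_G^2$, where $\tilde\gamma_k=\gamma_{k-1}-\beta(A\tilde x_k+By_{k-1}-b)$; set $\gamma_{k-1/2}=\gamma_{k-1}-\tau\beta(A\tilde x_k+By_{k-1}-b)$; let $y_k$ be an optimal solution of $\min_y\{g(y)-\langle\gamma_{k-1/2},By\rangle+\frac\beta2\|A\tilde x_k+By-b\|^2+\frac12\|y-y_{k-1}\|_H^2\}$; set $x_k=x_{k-1}-G^{-1}u_k$ and $\gamma_k=\gamma_{k-1/2}-\theta\beta(A\tilde x_k+By_k-b)$. Definitions: $T(x,y,\gamma)=(\partial f(x)-A^*\gamma,\ \partial g(y)-B^*\gamma,\ Ax+By-b)$ (a set-valued operator on $\mathbb{R}^n\times\mathbb{R}^p\times\mathbb{R}^m$); $M=\begin{bmatrix}G&0&0\\0&H+\frac{(\tau-\tau\theta+\theta)\beta}{\tau+\theta}B^*B&-\frac{\tau}{\tau+\theta}B^*\\0&-\frac{\tau}{\tau+\theta}B&\frac{1}{(\tau+\theta)\beta}I\end{bmatrix}$. *)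

From HB Require Import structures.
From mathcomp Require Import all_boot all_order all_algebra.
From mathcomp Require Import all_classical all_reals all_analysis.
Set Implicit Arguments. Unset Strict Implicit. Unset Printing Implicit Defensive.
Import Order.TTheory GRing.Theory Num.Theory.
Import numFieldNormedType.Exports.
Local Open Scope classical_set_scope.
Local Open Scope ring_scope.

Definition dotv {R : realType} {n : nat} (v w : 'cV[R]_n) : R := (v^T *m w) 0 0.

Definition sqnormQ {R : realType} {n : nat} (Q : 'M[R]_n) (z : 'cV[R]_n) : R :=
  dotv (Q *m z) z.

Definition sqnorm {R : realType} {n : nat} (z : 'cV[R]_n) : R := dotv z z.

Definition posdef {R : realType} {n : nat} (Q : 'M[R]_n) : Prop :=
  Q^T = Q /\ forall v : 'cV[R]_n, v != 0 -> 0 < dotv (Q *m v) v.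
Definition possemidef {R : realType} {n : nat} (Q : 'M[R]_n) : Prop :=
  Q^T = Q /\ forall v : 'cV[R]_n, 0 <= dotv (Q *m v) v.

Definition proper_fun {R : realType} {n : nat} (f : 'cV[R]_n -> \bar R) : Prop :=
  (forall x, f x != -oo%E) /\ exists x, f x \is a fin_num.

Definition convex_efun {R : realType} {n : nat} (f : 'cV[R]_n -> \bar R) : Prop :=
  forall (x y : 'cV[R]_n) (t : R), 0 < t < 1 ->
    (f (t *: x + (1 - t) *: y)%R <= t%:E * f x + (1 - t)%:E * f y)%E.

Definition closed_fun {R : realType} {n : nat} (f : 'cV[R]_n -> \bar R) : Prop :=
  lower_semicontinuous f.

Definition proper_closed_convex {R : realType} {n : nat} (f : 'cV[R]_n -> \bar R) :=
  [/\ proper_fun f, closed_fun f & convex_efun f].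

Definition subdiff {R : realType} {n : nat} (f : 'cV[R]_n -> \bar R) (x : 'cV[R]_n)
  : set 'cV[R]_n :=
  [set v | f x \is a fin_num /\
           forall z, (f x + (dotv v (z - x))%:E <= f z)%E].

Definition set_subv {R : realType} {n : nat} (S : set 'cV[R]_n) (w : 'cV[R]_n)
  : set 'cV[R]_n := [set s - w | s in S].

Definition zvec {R : realType} {n p m : nat}
  (x : 'cV[R]_n) (y : 'cV[R]_p) (g : 'cV[R]_m) : 'cV[R]_(n + (p + m)) :=
  col_mx x (col_mx y g).

(* The operator T(x,y,gamma) = (df(x) - A^* gamma, dg(y) - B^* gamma, Ax+By-b) *)
Definition Top {R : realType} {n p m : nat}
  (f : 'cV[R]_n -> \bar R) (g : 'cV[R]_p -> \bar R)
  (A : 'M[R]_(m, n)) (B : 'M[R]_(m, p)) (b : 'cV[R]_m)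
  (z : 'cV[R]_(n + (p + m))) : set 'cV[R]_(n + (p + m)) :=
  let x := usubmx z in
  let y := usubmx (dsubmx z) in
  let gam := dsubmx (dsubmx z) in
  [set w | set_subv (subdiff f x) (A^T *m gam) (usubmx w) /\
           set_subv (subdiff g y) (B^T *m gam) (usubmx (dsubmx w)) /\
           dsubmx (dsubmx w) = A *m x + B *m y - b].

Definition Mmat {R : realType} {n p m : nat}
  (G : 'M[R]_n) (H : 'M[R]_p) (B : 'M[R]_(m, p)) (beta tau theta : R)
  : 'M[R]_(n + (p + m)) :=
  block_mx G 0 0
    (block_mx (H + ((tau - tau * theta + theta) * beta / (tau + theta)) *: (B^T *m B))
              (- (tau / (tau + theta)) *: B^T)
              (- (tau / (tau + theta)) *: B)
              ((1 / ((tau + theta) * beta)) *: 1%:M)).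

Definition Rregion {R : realType} (sig tau theta : R) : Prop :=
  [/\ -1 < tau < 1 - sig, 0 < tau + theta &
      0 < (1 - tau ^+ 2) * (2 - tau - theta - sig)
          - (1 - theta) ^+ 2 * (1 - tau - sig)].

From HB Require Import structures.
From mathcomp Require Import all_boot all_order all_algebra.
From mathcomp Require Import all_classical all_reals all_analysis.
From mathcomp Require Import ring lra.
Import Order.TTheory GRing.Theory Num.Theory.
Import numFieldNormedType.Exports.
Local Open Scope classical_set_scope.
Local Open Scope ring_scope.

(* Every relation is an optimality condition of one subproblem, written in the
   residuals r0 = A xt_k + B y_(k-1) - b and r = A xt_k + B y_k - b.  The x-step
   gives u_k = G (x_(k-1) - x_k) directly.  The y-step minimizes g plus a smooth
   quadratic whose gradient at y_k is
   B^T ghalf_k - beta B^T r + H (y_(k-1) - y_k).  The multiplier updates give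
   B (y_(k-1) - y_k) = r0 - r and gam_(k-1) - gam_k = tau beta r0 + theta beta r,
   a system that can be solved for r0 and r because tau + theta != 0;
   substituting turns the y-step condition and the residual into the second and
   third rows of M. *)

Section DotProduct.
Variables (R : realType) (n : nat).
Implicit Types (u v w : 'cV[R]_n) (Q : 'M[R]_n).

Lemma dotvC u v : dotv u v = dotv v u.
Proof. by rewrite /dotv -[u^T *m v]trmxK trmx_mul trmxK mxE. Qed.

Lemma dotvDl u v w : dotv (u + v) w = dotv u w + dotv v w.
Proof. by rewrite /dotv linearD /= mulmxDl mxE. Qed.

Lemma dotvDr u v w : dotv w (u + v) = dotv w u + dotv w v.
Proof. by rewrite dotvC dotvDl !(dotvC w). Qed.

Lemma dotvZl a u w : dotv (a *: u) w = a * dotv u w.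
Proof. by rewrite /dotv linearZ /= -scalemxAl mxE. Qed.

Lemma dotvZr a u w : dotv w (a *: u) = a * dotv w u.
Proof. by rewrite dotvC dotvZl dotvC. Qed.

Lemma dotvNl u w : dotv (- u) w = - dotv u w.
Proof. by rewrite -scaleN1r dotvZl mulN1r. Qed.

Lemma dotv_mulmx k (M : 'M[R]_(k, n)) (v : 'cV[R]_k) w :
  dotv v (M *m w) = dotv (M^T *m v) w.
Proof. by rewrite /dotv trmx_mul trmxK mulmxA. Qed.

Lemma sqnormQ_addZ Q v e t : Q^T = Q ->
  sqnormQ Q (v + t *: e)
  = sqnormQ Q v + 2 * t * dotv (Q *m v) e + t ^+ 2 * sqnormQ Q e.
Proof.
move=> symQ; rewrite /sqnormQ mulmxDr -scalemxAr.
have QvC : dotv (Q *m e) v = dotv (Q *m v) e.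
  by rewrite dotvC dotv_mulmx symQ.
rewrite !(dotvDl, dotvDr, dotvZl, dotvZr) QvC; ring.
Qed.

Lemma sqnorm_addZ v e t :
  sqnorm (v + t *: e) = sqnorm v + 2 * t * dotv v e + t ^+ 2 * sqnorm e.
Proof.
have sqnormE (z : 'cV[R]_n) : sqnorm z = sqnormQ 1%:M z by rewrite /sqnormQ mul1mx.
by rewrite !sqnormE sqnormQ_addZ ?trmx1 // mul1mx.
Qed.

End DotProduct.

Lemma posdef_unitmx (R : realType) n (G : 'M[R]_n) : posdef G -> G \in unitmx.
Proof.
case=> symG posG; rewrite unitmxE unitfE; apply/negP => /det0P [v v0 vG0].
have := posG v^T; rewrite trmx_eq0 => /(_ v0).
have -> : G *m v^T = 0 by rewrite -symG -trmx_mul vG0 trmx0.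
by rewrite /dotv linear0 mul0mx mxE ltxx.
Qed.

Lemma le_of_forall_le_addr_mul (R : realFieldType) (a c q : R) :
  (forall t, 0 < t < 1 -> a <= c + t * q) -> a <= c.
Proof.
move=> le_ac; apply/ler_addgt0Pr => eps eps0.
have [q_le0|q_gt0] := lerP q 0.
  by have := le_ac (1 / 2); rewrite !ltr_pdivrMr ?ltr_pdivlMr //; nra.
have epsq0 : 0 < eps + q by lra.
have t01 : 0 < eps / (eps + q) < 1.
  by apply/andP; split; [exact: divr_gt0 | rewrite ltr_pdivrMr //; lra].
apply: (le_trans (le_ac _ t01)); rewrite lerD2l mulrAC ler_pdivrMr //; nra.
Qed.

Section FirstOrderOptimality.
Variables (R : realType) (p : nat) (g : 'cV[R]_p -> \bar R).
Hypotheses (g_proper : proper_fun g) (g_convex : convex_efun g).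

(* Convexity on [y0, z] and minimality at y0 + t (z - y0) combine to
   t (g y0 + <s, z - y0>) <= t (g z + t Q (z - y0)); divide by t, let t -> 0. *)
Lemma subdiff_of_min_addr (phi Q : 'cV[R]_p -> R) (s y0 : 'cV[R]_p) :
  (forall y, (g y0 + (phi y0)%:E <= g y + (phi y)%:E)%E) ->
  (forall e t, phi (y0 + t *: e) = phi y0 - t * dotv s e + t ^+ 2 * Q e) ->
  subdiff g y0 s.
Proof.
case: g_proper => g_ninf [z0 gz0] min_y0 phi_line.
have gy0 : g y0 \is a fin_num.
  rewrite fin_numE g_ninf /=; apply/negP => /eqP gy0_oo.
  by have := min_y0 z0; rewrite gy0_oo /= -(fineK gz0) -EFinD addye // leye_eq.
split => // z; have [gz|] := boolP (g z \is a fin_num); last first.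
  by rewrite fin_numE g_ninf /= negbK => /eqP ->; exact: leey.
set e := z - y0.
rewrite -(fineK gy0) -(fineK gz) -EFinD lee_fin.
apply: (@le_of_forall_le_addr_mul _ _ _ (Q e)) => t /andP[t0 t1].
have segment : t *: z + (1 - t) *: y0 = y0 + t *: e.
  by apply/matrixP=> i j; rewrite /e !mxE; ring.
have cvx : (g (y0 + t *: e) <= t%:E * g z + (1 - t)%:E * g y0)%E.
  by rewrite -segment; apply: g_convex; rewrite t0 t1.
have gyt : g (y0 + t *: e) \is a fin_num.
  rewrite fin_numE g_ninf /=; apply/negP => /eqP gyt_oo.
  move: cvx; rewrite gyt_oo -(fineK gz) -(fineK gy0) -!EFinM -EFinD.
  by rewrite leye_eq.
have min_t := min_y0 (y0 + t *: e).
rewrite -(fineK gyt) -(fineK gz) -(fineK gy0) -!EFinM -EFinD lee_fin in cvx.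
rewrite -(fineK gyt) -(fineK gy0) -!EFinD lee_fin phi_line in min_t.
by rewrite -(ler_pM2l t0); nra.
Qed.

End FirstOrderOptimality.

Section BlockVectors.
Variables (R : realType) (n p m : nat).

Lemma zvecB (x x' : 'cV[R]_n) (y y' : 'cV[R]_p) (g g' : 'cV[R]_m) :
  zvec x y g - zvec x' y' g' = zvec (x - x') (y - y') (g - g').
Proof. by rewrite /zvec !opp_col_mx !add_col_mx. Qed.

Lemma Mmat_zvec (G : 'M[R]_n) (H : 'M[R]_p) (B : 'M[R]_(m, p))
    (beta tau theta : R) (x : 'cV[R]_n) (y : 'cV[R]_p) (g : 'cV[R]_m) :
  Mmat G H B beta tau theta *m zvec x y g
  = zvec (G *m x)
      ((H + ((tau - tau * theta + theta) * beta / (tau + theta)) *: (B^T *m B)) *m y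
       - (tau / (tau + theta)) *: (B^T *m g))
      (- (tau / (tau + theta)) *: (B *m y) + (1 / ((tau + theta) * beta)) *: g).
Proof.
rewrite /Mmat /zvec !mul_block_col !mul0mx addr0 add0r -!scalemxAl mul1mx.
by rewrite scaleNr.
Qed.

Lemma Top_zvec f g A B b (x : 'cV[R]_n) (y : 'cV[R]_p) (gam : 'cV[R]_m)
    (w1 : 'cV[R]_n) (w2 : 'cV[R]_p) (w3 : 'cV[R]_m) :
  Top f g A B b (zvec x y gam) (zvec w1 w2 w3)
  <-> [/\ set_subv (subdiff f x) (A^T *m gam) w1,
          set_subv (subdiff g y) (B^T *m gam) w2
        & w3 = A *m x + B *m y - b].
Proof. by rewrite /Top /zvec /= !(col_mxKu, col_mxKd); split=> [[? []]|[]]. Qed.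

End BlockVectors.

Section AdmmStep.
Context {R : realType} {n p m : nat}.
Context {A : 'M[R]_(m, n)} {B : 'M[R]_(m, p)} {b : 'cV[R]_m} {H : 'M[R]_p}.
Context {beta tau theta : R}.
Context {xt : 'cV[R]_n} {y0 y : 'cV[R]_p} {gam0 gt gh gam : 'cV[R]_m}.

Hypothesis gtE : gt = gam0 - beta *: (A *m xt + B *m y0 - b).
Hypothesis ghE : gh = gam0 - (tau * beta) *: (A *m xt + B *m y0 - b).
Hypothesis gamE : gam = gh - (theta * beta) *: (A *m xt + B *m y - b).
Hypothesis tau_theta_neq0 : tau + theta != 0.

Local Notation r0 := (A *m xt + B *m y0 - b).
Local Notation r := (A *m xt + B *m y - b).

Lemma mulmx_ydiff : B *m (y0 - y) = r0 - r.
Proof.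
rewrite mulmxBr; move: (A *m xt) (B *m y0) (B *m y) => u v w.
by apply/matrixP=> i j; rewrite !mxE; ring.
Qed.

Lemma gam_diff : gam0 - gam = (tau * beta) *: r0 + (theta * beta) *: r.
Proof.
rewrite gamE ghE; move: r0 r => u v.
by apply/matrixP=> i j; rewrite !mxE; ring.
Qed.

Lemma residual_of_diffs : beta != 0 ->
  - (tau / (tau + theta)) *: (B *m (y0 - y))
    + (1 / ((tau + theta) * beta)) *: (gam0 - gam) = r.
Proof.
move=> beta_neq0; rewrite mulmx_ydiff gam_diff; move: r0 r => u v.
by apply/matrixP=> i j; rewrite !mxE; field; rewrite tau_theta_neq0 beta_neq0.
Qed.

Definition y_objective (yy : 'cV[R]_p) : R :=
  - dotv gh (B *m yy) + beta / 2 * sqnorm (A *m xt + B *m yy - b)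
  + 1 / 2 * sqnormQ H (yy - y0).

Definition y_gradient : 'cV[R]_p :=
  B^T *m gh - beta *: (B^T *m r) + H *m (y0 - y).

Lemma y_objective_line : H^T = H -> forall e t,
  y_objective (y + t *: e)
  = y_objective y - t * dotv y_gradient e
    + t ^+ 2 * (beta / 2 * sqnorm (B *m e) + 1 / 2 * sqnormQ H e).
Proof.
move=> symH e t.
rewrite /y_objective /y_gradient [B *m (y + _)]mulmxDr -scalemxAr.
have -> : A *m xt + (B *m y + t *: (B *m e)) - b = r + t *: (B *m e).
  move: (A *m xt) (B *m y) (B *m e) => u v w.
  by apply/matrixP=> i j; rewrite !mxE; ring.
have -> : y + t *: e - y0 = (y - y0) + t *: e.
  by apply/matrixP=> i j; rewrite !mxE; ring.
rewrite -[y0 - y]opprB mulmxN; move: r (y - y0) => u d.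
rewrite sqnorm_addZ sqnormQ_addZ //.
rewrite !(dotvDl, dotvDr, dotvZl, dotvZr, dotvNl) -!dotv_mulmx.
by field.
Qed.

Lemma y_gradient_shift :
  y_gradient - B^T *m gt
  = (H + ((tau - tau * theta + theta) * beta / (tau + theta)) *: (B^T *m B))
      *m (y0 - y)
    - (tau / (tau + theta)) *: (B^T *m (gam0 - gam)).
Proof.
rewrite /y_gradient mulmxDl -scalemxAl -mulmxA mulmx_ydiff gam_diff ghE gtE.
move: r0 r => u v; rewrite !mulmxBr !mulmxDr -!scalemxAr.
move: (B^T *m gam0) (B^T *m u) (B^T *m v) (H *m (y0 - y)) => {}u {}v w h.
by apply/matrixP=> i j; rewrite !mxE; field; rewrite tau_theta_neq0.
Qed.

Lemma y_step_subdiff (g : 'cV[R]_p -> \bar R) :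
  proper_fun g -> convex_efun g -> H^T = H ->
  (forall yy, (g y + (y_objective y)%:E <= g yy + (y_objective yy)%:E)%E) ->
  set_subv (subdiff g y) (B^T *m gt)
    ((H + ((tau - tau * theta + theta) * beta / (tau + theta)) *: (B^T *m B))
       *m (y0 - y)
     - (tau / (tau + theta)) *: (B^T *m (gam0 - gam))).
Proof.
move=> g_proper g_convex symH y_min; rewrite -y_gradient_shift.
by exists y_gradient; first exact: subdiff_of_min_addr y_min (y_objective_line symH).
Qed.

End AdmmStep.

Theorem theorem2p3 (R : realType) (n p m : nat)
  (f : 'cV[R]_n -> \bar R) (g : 'cV[R]_p -> \bar R)
  (A : 'M[R]_(m, n)) (B : 'M[R]_(m, p)) (b : 'cV[R]_m)
  (hf : proper_closed_convex f) (hg : proper_closed_convex g)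
  (hsol : exists (xs : 'cV[R]_n) (ys : 'cV[R]_p) (gs : 'cV[R]_m),
      [/\ set_subv (subdiff f xs) (A^T *m gs) 0,
          set_subv (subdiff g ys) (B^T *m gs) 0 &
          A *m xs + B *m ys - b = 0])
  (beta sigt sigh tau theta : R) (G : 'M[R]_n) (H : 'M[R]_p)
  (hbeta : 0 < beta) (hsigt : 0 <= sigt < 1) (hsigh : 0 <= sigh < 1)
  (hG : posdef G) (hH : possemidef H) (hreg : Rregion sigt tau theta)
  (x : nat -> 'cV[R]_n) (y : nat -> 'cV[R]_p) (gam : nat -> 'cV[R]_m)
  (xt : nat -> 'cV[R]_n) (u : nat -> 'cV[R]_n) (gt : nat -> 'cV[R]_m)
  (ghalf : nat -> 'cV[R]_m)
  (hgt : forall k, (0 < k)%N ->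
      gt k = gam k.-1 - beta *: (A *m xt k + B *m y k.-1 - b))
  (hu : forall k, (0 < k)%N ->
      set_subv (subdiff f (xt k)) (A^T *m gt k) (u k))
  (hinexact : forall k, (0 < k)%N ->
      sqnormQ G (xt k - x k.-1 + invmx G *m u k)
      <= sigt / beta * sqnorm (gt k - gam k.-1) + sigh * sqnormQ G (xt k - x k.-1))
  (hghalf : forall k, (0 < k)%N ->
      ghalf k = gam k.-1 - (tau * beta) *: (A *m xt k + B *m y k.-1 - b))
  (hy : forall k, (0 < k)%N -> forall yy : 'cV[R]_p,
      (g (y k) + (- dotv (ghalf k) (B *m y k)
                  + beta / 2 * sqnorm (A *m xt k + B *m y k - b)
                  + 1 / 2 * sqnormQ H (y k - y k.-1))%:E
       <= g yy + (- dotv (ghalf k) (B *m yy)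
                  + beta / 2 * sqnorm (A *m xt k + B *m yy - b)
                  + 1 / 2 * sqnormQ H (yy - y k.-1))%:E)%E)
  (hx : forall k, (0 < k)%N -> x k = x k.-1 - invmx G *m u k)
  (hgam : forall k, (0 < k)%N ->
      gam k = ghalf k - (theta * beta) *: (A *m xt k + B *m y k - b)) :
  forall k, (0 < k)%N ->
    [/\ set_subv (subdiff f (xt k)) (A^T *m gt k) (G *m (x k.-1 - x k)),
        set_subv (subdiff g (y k)) (B^T *m gt k)
          ((H + ((tau - tau * theta + theta) * beta / (tau + theta)) *: (B^T *m B))
             *m (y k.-1 - y k)
           - (tau / (tau + theta)) *: (B^T *m (gam k.-1 - gam k))),
        - (tau / (tau + theta)) *: (B *m (y k.-1 - y k))
          + (1 / ((tau + theta) * beta)) *: (gam k.-1 - gam k)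
          = A *m xt k + B *m y k - b
      & Top f g A B b (zvec (xt k) (y k) (gt k))
          (Mmat G H B beta tau theta
             *m (zvec (x k.-1) (y k.-1) (gam k.-1) - zvec (x k) (y k) (gam k)))].
Proof.
move=> k k_gt0.
case: hg => g_proper _ g_convex; case: hH => symH _.
have tau_theta_neq0 : tau + theta != 0 by case: hreg => _ /gt_eqF ->.
have beta_neq0 : beta != 0 by rewrite gt_eqF.
have x_step : G *m (x k.-1 - x k) = u k.
  by rewrite (hx k k_gt0) opprB addrC subrK mulKVmx // posdef_unitmx.
have f_incl := hu k k_gt0; rewrite -x_step in f_incl.
have g_incl := y_step_subdiff (hgt k k_gt0) (hghalf k k_gt0) (hgam k k_gt0)
  tau_theta_neq0 g g_proper g_convex symH (hy k k_gt0).
have residual := residual_of_diffs (hghalf k k_gt0) (hgam k k_gt0) tau_theta_neq0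
  beta_neq0.
split => //; rewrite zvecB Mmat_zvec; exact/Top_zvec.
Qed.
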